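(* With the setting of the conformal-gauge Dirac bracket (constraints $\vec x\cdot\vec p=0$, $|\vec x|^2=|\vec p|^2$, $\vec x\wedge\vec p\ne0$, Dirac bracket $\{\cdot,\cdot\}_D$, and $\mathcal N=|\vec J|$, $\vec J=\vec x\wedge\vec p$, $\vec K=|\vec x|\vec x$, $\vec L=|\vec p|\vec p$), define on the constraint surface the complex functions $$w_0=K_-+iL_-=(|\vec x|p_2+|\vec p|x_1)-i(|\vec p|x_2-|\vec x|p_1),\qquad w_1=-(K_++iL_+),$$ where $K_\pm=K_1\pm iK_2$, $L_\pm=L_1\pm iL_2$. Then $|w_0|=\mathcal N+J_3$, $|w_1|=\mathcal N-J_3$, and $$\{w_0,w_1\}_D=0,\quad \{w_0,\bar w_1\}_D=0,\quad \{w_0,\bar w_0\}_D=-4i(\mathcal N+J_3),\quad \{w_1,\bar w_1\}_D=-4i(\mathcal N-J_3).$$ Consequently, if $(z_0,z_1)$ are (locally defined) square roots with $z_A^2=w_A$, then $\frac12(|z_0|^2+|z_1|^2)=\mathcal N$, $\frac12(|z_0|^2-|z_1|^2)=J_3$, and these brackets are those of canonical spinor variables with $\{z_A,\bar z_B\}=-i\delta_{AB}$, $\{z_A,z_B\}=0$. *)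

(* classical reals. Phase space R^6 with coordinates
   v 0, v 1, v 2 = x1, x2, x3 and v 3, v 4, v 5 = p1, p2, p3. *)
From Stdlib Require Import Reals ClassicalEpsilon.
Open Scope R_scope.

Definition V := nat -> R.

Definition upd (v : V) (i : nat) (t : R) : V :=
  fun j => if Nat.eqb j i then t else v j.

(* i-th partial derivative at v (the derivative of the coordinate-line
   restriction, chosen by epsilon; it is the genuine one whenever it exists) *)
Definition pd (f : V -> R) (i : nat) (v : V) : R :=
  epsilon (inhabits 0)
    (fun l => derivable_pt_lim (fun t => f (upd v i t)) (v i) l).

Definition has_partials (f : V -> R) (v : V) : Prop :=
  forall i, (i < 6)%nat ->
    exists l, derivable_pt_lim (fun t => f (upd v i t)) (v i) l.

Definition pb (f g : V -> R) (v : V) : R :=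
    (pd f 0 v * pd g 3 v - pd f 3 v * pd g 0 v)
  + (pd f 1 v * pd g 4 v - pd f 4 v * pd g 1 v)
  + (pd f 2 v * pd g 5 v - pd f 5 v * pd g 2 v).

Definition x1 (v : V) := v 0%nat.
Definition x2 (v : V) := v 1%nat.
Definition x3 (v : V) := v 2%nat.
Definition p1 (v : V) := v 3%nat.
Definition p2 (v : V) := v 4%nat.
Definition p3 (v : V) := v 5%nat.

Definition normx (v : V) := sqrt (x1 v ^ 2 + x2 v ^ 2 + x3 v ^ 2).
Definition normp (v : V) := sqrt (p1 v ^ 2 + p2 v ^ 2 + p3 v ^ 2).

Definition phi1 (v : V) : R := x1 v * p1 v + x2 v * p2 v + x3 v * p3 v.
Definition phi2 (v : V) : R :=
  (x1 v ^ 2 + x2 v ^ 2 + x3 v ^ 2) - (p1 v ^ 2 + p2 v ^ 2 + p3 v ^ 2).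

(* Dirac bracket for the two second-class constraints:
   {f,g}_D = {f,g} - sum_{a,b} {f,phi_a} (C^-1)_{ab} {phi_b,g},
   C_{ab} = {phi_a,phi_b} = [[0,c],[-c,0]], c = {phi1,phi2},
   C^-1 = (1/c) [[0,-1],[1,0]]. *)
Definition dirac (f g : V -> R) (v : V) : R :=
  pb f g v
  - (pb f phi2 v * pb phi1 g v - pb f phi1 v * pb phi2 g v) / pb phi1 phi2 v.

Definition J1 (v : V) := x2 v * p3 v - x3 v * p2 v.
Definition J2 (v : V) := x3 v * p1 v - x1 v * p3 v.
Definition J3 (v : V) := x1 v * p2 v - x2 v * p1 v.
Definition NN (v : V) := sqrt (J1 v ^ 2 + J2 v ^ 2 + J3 v ^ 2).

Definition on_surface (v : V) : Prop :=
  phi1 v = 0 /\ phi2 v = 0 /\ ~ (J1 v = 0 /\ J2 v = 0 /\ J3 v = 0).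

Definition Cx := (R * R)%type.
Definition cadd (a b : Cx) : Cx := (fst a + fst b, snd a + snd b).
Definition cmul (a b : Cx) : Cx :=
  (fst a * fst b - snd a * snd b, fst a * snd b + snd a * fst b).
Definition copp (a : Cx) : Cx := (- fst a, - snd a).
Definition ci : Cx := (0, 1).
Definition cnorm (a : Cx) : R := sqrt (fst a ^ 2 + snd a ^ 2).

Definition cconj (F : V -> Cx) : V -> Cx := fun u => (fst (F u), - snd (F u)).

(* Dirac bracket extended C-bilinearly to complex-valued functions *)
Definition cdirac (F G : V -> Cx) (v : V) : Cx :=
  let u1 := fun u => fst (F u) in let v1 := fun u => snd (F u) in
  let u2 := fun u => fst (G u) in let v2 := fun u => snd (G u) in
  (dirac u1 u2 v - dirac v1 v2 v, dirac u1 v2 v + dirac v1 u2 v).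

Definition cdiff (F : V -> Cx) (v : V) : Prop :=
  has_partials (fun u => fst (F u)) v /\ has_partials (fun u => snd (F u)) v.

Definition K1 (v : V) := normx v * x1 v.
Definition K2 (v : V) := normx v * x2 v.
Definition L1 (v : V) := normp v * p1 v.
Definition L2 (v : V) := normp v * p2 v.
Definition Kplus (v : V) : Cx := (K1 v, K2 v).
Definition Kminus (v : V) : Cx := (K1 v, - K2 v).
Definition Lplus (v : V) : Cx := (L1 v, L2 v).
Definition Lminus (v : V) : Cx := (L1 v, - L2 v).

Definition w0 (v : V) : Cx := cadd (Kminus v) (cmul ci (Lminus v)).
Definition w1 (v : V) : Cx := copp (cadd (Kplus v) (cmul ci (Lplus v))).

Definition local_sqrt (z w : V -> Cx) (v : V) : Prop :=
  exists d, 0 < d /\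
    forall u : V, (forall j, (j < 6)%nat -> Rabs (u j - v j) < d) ->
      cmul (z u) (z u) = w u.

(* On the constraint surface |x| = |p| = r, x . p = 0, the Dirac brackets of the components of
   K = |x| x and L = |p| p close on the angular momentum:
   {K_i, K_j} = {L_i, L_j} = - eps_ijk J_k and {K_i, L_j} = delta_ij N, with N = r^2.
   The brackets of w0 = K_- + i L_- and w1 = - (K_+ + i L_+) are bilinear combinations of these,
   and |w0|, |w1| follow from (x/r, p/r, J/r^2) being an orthonormal frame.
   If z^2 = w near v, the chain rule gives {z^2, z'^2} = 4 z z' {z, z'}; moreover z(v) <> 0, since
   otherwise d(Re w) = 2 (Re z d(Re z) - Im z d(Im z)) would vanish at v, whereas
   d(Re w0)/dx1 = x1^2/r + r > 0.  Dividing by 4 |z|^2 = 4 |w| gives the canonical brackets. *)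

From Stdlib Require Import Reals Lra Lia Nsatz FunctionalExtensionality ClassicalEpsilon.
Open Scope R_scope.

Lemma upd_same v i : upd v i (v i) = v.
Proof.
  apply functional_extensionality; intro j; unfold upd.
  destruct (Nat.eqb_spec j i); subst; reflexivity.
Qed.

Lemma pd_unique f i v l :
  derivable_pt_lim (fun t => f (upd v i t)) (v i) l -> pd f i v = l.
Proof.
  intro Hl; apply (uniqueness_limite (fun t => f (upd v i t)) (v i)); auto.
  unfold pd; apply epsilon_spec; now exists l.
Qed.

Definition is_gradient (f : V -> R) (v : V) (g : nat -> R) : Prop :=
  forall i, (i < 6)%nat -> derivable_pt_lim (fun t => f (upd v i t)) (v i) (g i).

Lemma is_gradient_pd f v g i : is_gradient f v g -> (i < 6)%nat -> pd f i v = g i.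
Proof. intros Hg Hi; apply pd_unique, Hg, Hi. Qed.

Lemma is_gradient_of_partials f v : has_partials f v -> is_gradient f v (fun i => pd f i v).
Proof.
  intros H i Hi; destruct (H i Hi) as [l Hl].
  rewrite (pd_unique _ _ _ _ Hl); exact Hl.
Qed.

Lemma has_partials_of_gradient f v g : is_gradient f v g -> has_partials f v.
Proof. intros Hg i Hi; exists (g i); apply Hg, Hi. Qed.

Lemma is_gradient_ext_fun f f' v g :
  (forall u, f u = f' u) -> is_gradient f' v g -> is_gradient f v g.
Proof.
  intros Ef H i Hi.
  replace (fun t => f (upd v i t)) with (fun t => f' (upd v i t)).
  - apply H, Hi.
  - apply functional_extensionality; intro t; now rewrite Ef.
Qed.

Lemma is_gradient_ext f v g g' :
  (forall i, (i < 6)%nat -> g i = g' i) -> is_gradient f v g' -> is_gradient f v g.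
Proof. intros Eg H i Hi; rewrite Eg by exact Hi; apply H, Hi. Qed.

Definition unit_vec (k i : nat) : R := if Nat.eqb k i then 1 else 0.

Lemma is_gradient_coord k v : is_gradient (fun u => u k) v (unit_vec k).
Proof.
  intros i _; unfold upd, unit_vec.
  destruct (Nat.eqb k i).
  - apply derivable_pt_lim_id.
  - apply derivable_pt_lim_const.
Qed.

Lemma is_gradient_plus f g v a b : is_gradient f v a -> is_gradient g v b ->
  is_gradient (fun u => f u + g u) v (fun i => a i + b i).
Proof.
  intros Ha Hb i Hi.
  apply (derivable_pt_lim_plus (fun t => f (upd v i t)) (fun t => g (upd v i t))); auto.
Qed.

Lemma is_gradient_mult f g v a b : is_gradient f v a -> is_gradient g v b ->
  is_gradient (fun u => f u * g u) v (fun i => a i * g v + f v * b i).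
Proof.
  intros Ha Hb i Hi.
  pose proof (derivable_pt_lim_mult (fun t => f (upd v i t)) (fun t => g (upd v i t))
                _ _ _ (Ha i Hi) (Hb i Hi)) as H.
  simpl in H; rewrite upd_same in H; exact H.
Qed.

Lemma is_gradient_minus f g v a b : is_gradient f v a -> is_gradient g v b ->
  is_gradient (fun u => f u - g u) v (fun i => a i - b i).
Proof.
  intros Ha Hb i Hi.
  apply (derivable_pt_lim_minus (fun t => f (upd v i t)) (fun t => g (upd v i t))); auto.
Qed.

Lemma is_gradient_opp f v a : is_gradient f v a ->
  is_gradient (fun u => - f u) v (fun i => - a i).
Proof. intros Ha i Hi; apply (derivable_pt_lim_opp (fun t => f (upd v i t))), Ha, Hi. Qed.

Lemma is_gradient_scal c f v a : is_gradient f v a ->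
  is_gradient (fun u => c * f u) v (fun i => c * a i).
Proof. intros Ha i Hi; apply (derivable_pt_lim_scal (fun t => f (upd v i t))), Ha, Hi. Qed.

Lemma is_gradient_sqrt f v a : 0 < f v -> is_gradient f v a ->
  is_gradient (fun u => sqrt (f u)) v (fun i => a i / (2 * sqrt (f v))).
Proof.
  intros Hpos Ha i Hi.
  assert (Hs : derivable_pt_lim sqrt (f (upd v i (v i))) (/ (2 * sqrt (f v)))).
  { rewrite upd_same; apply derivable_pt_lim_sqrt, Hpos. }
  pose proof (derivable_pt_lim_comp (fun t => f (upd v i t)) sqrt _ _ _ (Ha i Hi) Hs) as H.
  unfold Rdiv; rewrite Rmult_comm; exact H.
Qed.

Ltac cases6 i := destruct i as [|[|[|[|[|[|i]]]]]]; [ .. | exfalso; lia ].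

Definition grad_normx (v : V) (i : nat) : R := if (i <? 3)%nat then v i / normx v else 0.
Definition grad_normp (v : V) (i : nat) : R := if (i <? 3)%nat then 0 else v i / normp v.

Lemma sqrt_neq0_pos x : sqrt x <> 0 -> 0 < x.
Proof. intro H; destruct (Rlt_or_le 0 x) as [|Hx]; auto; now rewrite sqrt_neg_0 in H. Qed.

Lemma is_gradient_pow2 f v a : is_gradient f v a ->
  is_gradient (fun u => f u ^ 2) v (fun i => 2 * f v * a i).
Proof.
  intro Ha; eapply is_gradient_ext_fun, is_gradient_ext, is_gradient_mult; eauto;
    intros; simpl; ring.
Qed.

Lemma is_gradient_normx v : normx v <> 0 -> is_gradient normx v (grad_normx v).
Proof.
  intro Hn; eapply is_gradient_ext.
  2: { apply is_gradient_sqrt.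
       - apply sqrt_neq0_pos, Hn.
       - repeat apply is_gradient_plus; apply is_gradient_pow2, is_gradient_coord. }
  intros i Hi; cases6 i; cbv [grad_normx unit_vec Nat.eqb Nat.ltb Nat.leb];
    fold (normx v); unfold x1, x2, x3; field; exact Hn.
Qed.

Lemma is_gradient_normp v : normp v <> 0 -> is_gradient normp v (grad_normp v).
Proof.
  intro Hn; eapply is_gradient_ext.
  2: { apply is_gradient_sqrt.
       - apply sqrt_neq0_pos, Hn.
       - repeat apply is_gradient_plus; apply is_gradient_pow2, is_gradient_coord. }
  intros i Hi; cases6 i; cbv [grad_normp unit_vec Nat.eqb Nat.ltb Nat.leb];
    fold (normp v); unfold p1, p2, p3; field; exact Hn.
Qed.

(* [K1], [K2] are [fun u => normx u * u k] for [k = 0, 1]; [L1], [L2] are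
   [fun u => normp u * u k] for [k = 3, 4]. *)
Definition grad_K (v : V) (k i : nat) : R := grad_normx v i * v k + normx v * unit_vec k i.
Definition grad_L (v : V) (k i : nat) : R := grad_normp v i * v k + normp v * unit_vec k i.

Lemma is_gradient_K k v : normx v <> 0 -> is_gradient (fun u => normx u * u k) v (grad_K v k).
Proof.
  intro Hn; apply is_gradient_mult; [apply is_gradient_normx, Hn | apply is_gradient_coord].
Qed.

Lemma is_gradient_L k v : normp v <> 0 -> is_gradient (fun u => normp u * u k) v (grad_L v k).
Proof.
  intro Hn; apply is_gradient_mult; [apply is_gradient_normp, Hn | apply is_gradient_coord].
Qed.

Definition grad_phi1 (v : V) (i : nat) : R :=
  match i with 0 => p1 v | 1 => p2 v | 2 => p3 v | 3 => x1 v | 4 => x2 v | 5 => x3 v | _ => 0 end.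
Definition grad_phi2 (v : V) (i : nat) : R :=
  match i with 0 => 2 * x1 v | 1 => 2 * x2 v | 2 => 2 * x3 v
  | 3 => - (2 * p1 v) | 4 => - (2 * p2 v) | 5 => - (2 * p3 v) | _ => 0 end.

Lemma is_gradient_phi1 v : is_gradient phi1 v (grad_phi1 v).
Proof.
  eapply is_gradient_ext.
  2: { unfold phi1; repeat apply is_gradient_plus;
       apply is_gradient_mult; apply is_gradient_coord. }
  intros i Hi; cases6 i; cbv [grad_phi1 unit_vec Nat.eqb]; unfold x1, x2, x3, p1, p2, p3; ring.
Qed.

Lemma is_gradient_phi2 v : is_gradient phi2 v (grad_phi2 v).
Proof.
  eapply is_gradient_ext.
  2: { unfold phi2; apply is_gradient_minus; repeat apply is_gradient_plus;
       apply is_gradient_pow2, is_gradient_coord. }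
  intros i Hi; cases6 i; cbv [grad_phi2 unit_vec Nat.eqb]; unfold x1, x2, x3, p1, p2, p3; ring.
Qed.

Definition symp (a b : nat -> R) : R :=
  (a 0%nat * b 3%nat - a 3%nat * b 0%nat) + (a 1%nat * b 4%nat - a 4%nat * b 1%nat)
  + (a 2%nat * b 5%nat - a 5%nat * b 2%nat).

Definition dirac_form (v : V) (a b : nat -> R) : R :=
  let c1 := grad_phi1 v in let c2 := grad_phi2 v in
  symp a b - (symp a c2 * symp c1 b - symp a c1 * symp c2 b) / symp c1 c2.

Lemma pb_gradient f g v a b : is_gradient f v a -> is_gradient g v b -> pb f g v = symp a b.
Proof.
  intros Ha Hb; unfold pb, symp.
  rewrite !(is_gradient_pd f v a), !(is_gradient_pd g v b) by (auto; lia); reflexivity.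
Qed.

Lemma dirac_gradient f g v a b : is_gradient f v a -> is_gradient g v b ->
  dirac f g v = dirac_form v a b.
Proof.
  intros Ha Hb; pose proof (is_gradient_phi1 v) as H1; pose proof (is_gradient_phi2 v) as H2.
  unfold dirac, dirac_form; cbv zeta.
  rewrite (pb_gradient _ _ _ _ _ Ha Hb), (pb_gradient _ _ _ _ _ Ha H1),
    (pb_gradient _ _ _ _ _ Ha H2), (pb_gradient _ _ _ _ _ H1 Hb),
    (pb_gradient _ _ _ _ _ H2 Hb), (pb_gradient _ _ _ _ _ H1 H2).
  reflexivity.
Qed.

Lemma dirac_antisym f g v : dirac f g v = - dirac g f v.
Proof. unfold dirac, pb, Rdiv; ring. Qed.

Lemma dirac_self f v : dirac f f v = 0.
Proof. pose proof (dirac_antisym f f v); lra. Qed.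

Definition combo (a : R) (f : V -> R) (b : R) (g : V -> R) : V -> R := fun u => a * f u + b * g u.

Lemma is_gradient_combo a f b g v fa gb : is_gradient f v fa -> is_gradient g v gb ->
  is_gradient (combo a f b g) v (fun i => a * fa i + b * gb i).
Proof. intros Hf Hg; apply is_gradient_plus; apply is_gradient_scal; assumption. Qed.

Lemma dirac_combo a f b g c h d k v :
  has_partials f v -> has_partials g v -> has_partials h v -> has_partials k v ->
  dirac (combo a f b g) (combo c h d k) v =
  a * c * dirac f h v + a * d * dirac f k v + b * c * dirac g h v + b * d * dirac g k v.
Proof.
  intros Hf Hg Hh Hk.
  apply is_gradient_of_partials in Hf, Hg, Hh, Hk.
  rewrite (dirac_gradient _ _ v _ _ Hf Hh), (dirac_gradient _ _ v _ _ Hf Hk),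
    (dirac_gradient _ _ v _ _ Hg Hh), (dirac_gradient _ _ v _ _ Hg Hk).
  rewrite (dirac_gradient _ _ v _ _ (is_gradient_combo a _ b _ _ _ _ Hf Hg)
    (is_gradient_combo c _ d _ _ _ _ Hh Hk)).
  unfold dirac_form, symp, Rdiv; cbv zeta; ring.
Qed.

Lemma lagrange_identity v :
  J1 v ^ 2 + J2 v ^ 2 + J3 v ^ 2 =
  (x1 v ^ 2 + x2 v ^ 2 + x3 v ^ 2) * (p1 v ^ 2 + p2 v ^ 2 + p3 v ^ 2) - phi1 v ^ 2.
Proof. unfold J1, J2, J3, phi1; ring. Qed.

Lemma on_surface_facts v : on_surface v ->
  0 < normx v /\ normp v = normx v /\ NN v = normx v ^ 2 /\
  normx v ^ 2 = x1 v ^ 2 + x2 v ^ 2 + x3 v ^ 2 /\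
  p1 v ^ 2 + p2 v ^ 2 + p3 v ^ 2 = x1 v ^ 2 + x2 v ^ 2 + x3 v ^ 2 /\
  x1 v * p1 v + x2 v * p2 v + x3 v * p3 v = 0.
Proof.
  intros (Hphi1 & Hphi2 & HJ); unfold phi2 in Hphi2.
  assert (Hsq : normx v ^ 2 = x1 v ^ 2 + x2 v ^ 2 + x3 v ^ 2)
    by (unfold normx; rewrite pow2_sqrt; [ring | nra]).
  assert (Hpos : 0 < x1 v ^ 2 + x2 v ^ 2 + x3 v ^ 2).
  { destruct (Rlt_or_le 0 (x1 v ^ 2 + x2 v ^ 2 + x3 v ^ 2)) as [| Hle]; auto.
    exfalso; apply HJ; unfold J1, J2, J3.
    assert (x1 v = 0) by nra; assert (x2 v = 0) by nra; assert (x3 v = 0) by nra.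
    repeat split; nra. }
  assert (Hnx : 0 < normx v) by (apply sqrt_lt_R0, Hpos).
  refine (conj Hnx (conj _ (conj _ (conj Hsq (conj _ Hphi1))))).
  - unfold normp, normx; f_equal; lra.
  - unfold NN; rewrite lagrange_identity, Hphi1, <- Hsq.
    replace (normx v ^ 2 * (p1 v ^ 2 + p2 v ^ 2 + p3 v ^ 2) - 0 ^ 2) with ((normx v ^ 2) ^ 2)
      by nra.
    apply sqrt_pow2; nra.
  - lra.
Qed.

(* The surface identities are checked modulo the ideal of r^2 = |x|^2, |p|^2 = |x|^2 and
   x . p = 0; nsatz only sees these once [pow] is unfolded into products. *)
Ltac surface_coords Hs :=
  let Hr := fresh in let Hp := fresh in let HN := fresh in
  let Hx := fresh in let Hpp := fresh in let Hxp := fresh in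
  destruct (on_surface_facts _ Hs) as (Hr & Hp & HN & Hx & Hpp & Hxp);
  rewrite ?Hp, ?HN; unfold x1, x2, x3, p1, p2, p3 in *;
  set (r := normx _) in *; clearbody r.

Ltac surface_algebra Hs :=
  unfold dirac_form, symp, grad_K, grad_L, grad_normx, grad_normp, grad_phi1, grad_phi2, unit_vec,
    J3;
  cbv zeta; cbv [Nat.eqb Nat.ltb Nat.leb];
  surface_coords Hs;
  field_simplify_eq; [cbn [pow] in *; nsatz | split; [lra | nra]].

Lemma is_gradient_K_surface k v : on_surface v ->
  is_gradient (fun u => normx u * u k) v (grad_K v k).
Proof. intro Hs; destruct (on_surface_facts _ Hs) as (Hr & _); apply is_gradient_K; lra. Qed.

Lemma is_gradient_L_surface k v : on_surface v ->
  is_gradient (fun u => normp u * u k) v (grad_L v k).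
Proof.
  intro Hs; destruct (on_surface_facts _ Hs) as (Hr & Hp & _); apply is_gradient_L; lra.
Qed.

Ltac KL_bracket a b Hs :=
  rewrite (dirac_gradient _ _ _ a b)
    by (apply is_gradient_K_surface || apply is_gradient_L_surface; exact Hs);
  surface_algebra Hs.

Lemma dirac_K1_K2 v : on_surface v -> dirac K1 K2 v = - J3 v.
Proof. intro Hs; KL_bracket (grad_K v 0) (grad_K v 1) Hs. Qed.

Lemma dirac_L1_L2 v : on_surface v -> dirac L1 L2 v = - J3 v.
Proof. intro Hs; KL_bracket (grad_L v 3) (grad_L v 4) Hs. Qed.

Lemma dirac_K1_L1 v : on_surface v -> dirac K1 L1 v = NN v.
Proof. intro Hs; KL_bracket (grad_K v 0) (grad_L v 3) Hs. Qed.

Lemma dirac_K2_L2 v : on_surface v -> dirac K2 L2 v = NN v.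
Proof. intro Hs; KL_bracket (grad_K v 1) (grad_L v 4) Hs. Qed.

Lemma dirac_K1_L2 v : on_surface v -> dirac K1 L2 v = 0.
Proof. intro Hs; KL_bracket (grad_K v 0) (grad_L v 4) Hs. Qed.

Lemma dirac_K2_L1 v : on_surface v -> dirac K2 L1 v = 0.
Proof. intro Hs; KL_bracket (grad_K v 1) (grad_L v 3) Hs. Qed.

Lemma w0_re : (fun u => fst (w0 u)) = combo 1 K1 1 L2.
Proof.
  apply functional_extensionality; intro u;
  cbv [w0 combo cadd cmul ci Kminus Lminus fst snd]; ring.
Qed.

Lemma w0_im : (fun u => snd (w0 u)) = combo 1 L1 (-1) K2.
Proof.
  apply functional_extensionality; intro u;
  cbv [w0 combo cadd cmul ci Kminus Lminus fst snd]; ring.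
Qed.

Lemma w1_re : (fun u => fst (w1 u)) = combo 1 L2 (-1) K1.
Proof.
  apply functional_extensionality; intro u;
  cbv [w1 combo copp cadd cmul ci Kplus Lplus fst snd]; ring.
Qed.

Lemma w1_im : (fun u => snd (w1 u)) = combo (-1) K2 (-1) L1.
Proof.
  apply functional_extensionality; intro u;
  cbv [w1 combo copp cadd cmul ci Kplus Lplus fst snd]; ring.
Qed.

Lemma cconj_w0_im : (fun u => snd (cconj w0 u)) = combo (-1) L1 1 K2.
Proof.
  apply functional_extensionality; intro u;
  cbv [cconj w0 combo cadd cmul ci Kminus Lminus fst snd]; ring.
Qed.

Lemma cconj_w1_im : (fun u => snd (cconj w1 u)) = combo 1 K2 1 L1.
Proof.
  apply functional_extensionality; intro u;
  cbv [cconj w1 combo copp cadd cmul ci Kplus Lplus fst snd]; ring.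
Qed.

Ltac w_brackets Hs :=
  unfold cdirac; cbv zeta; cbn [cconj fst];
  rewrite ?w0_re, ?w0_im, ?w1_re, ?w1_im, ?cconj_w0_im, ?cconj_w1_im;
  rewrite !dirac_combo
    by (eapply has_partials_of_gradient;
        first [apply is_gradient_K_surface | apply is_gradient_L_surface]; exact Hs);
  rewrite ?dirac_self, ?(dirac_antisym K2 K1), ?(dirac_antisym L2 L1), ?(dirac_antisym L1 K1),
    ?(dirac_antisym L2 K2), ?(dirac_antisym L2 K1), ?(dirac_antisym L1 K2);
  rewrite ?(dirac_K1_K2 _ Hs), ?(dirac_L1_L2 _ Hs), ?(dirac_K1_L1 _ Hs), ?(dirac_K2_L2 _ Hs),
    ?(dirac_K1_L2 _ Hs), ?(dirac_K2_L1 _ Hs);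
  f_equal; ring.

Lemma cdirac_w0_w1 v : on_surface v -> cdirac w0 w1 v = (0, 0).
Proof. intro Hs; w_brackets Hs. Qed.

Lemma cdirac_w0_cconj_w1 v : on_surface v -> cdirac w0 (cconj w1) v = (0, 0).
Proof. intro Hs; w_brackets Hs. Qed.

Lemma cdirac_w0_cconj_w0 v : on_surface v -> cdirac w0 (cconj w0) v = (0, - 4 * (NN v + J3 v)).
Proof. intro Hs; w_brackets Hs. Qed.

Lemma cdirac_w1_cconj_w1 v : on_surface v -> cdirac w1 (cconj w1) v = (0, - 4 * (NN v - J3 v)).
Proof. intro Hs; w_brackets Hs. Qed.

Lemma cdirac_w1_cconj_w0 v : on_surface v -> cdirac w1 (cconj w0) v = (0, 0).
Proof. intro Hs; w_brackets Hs. Qed.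

Lemma J3_between v : - NN v <= J3 v <= NN v.
Proof.
  assert (H : Rabs (J3 v) <= NN v).
  { unfold NN; rewrite <- sqrt_Rsqr_abs; apply sqrt_le_1_alt; unfold Rsqr; nra. }
  pose proof (Rle_abs (J3 v)); pose proof (Rle_abs (- J3 v)); rewrite Rabs_Ropp in *; lra.
Qed.

Lemma cnorm_w0 v : on_surface v -> cnorm (w0 v) = NN v + J3 v.
Proof.
  intro Hs; pose proof (J3_between v).
  unfold cnorm; rewrite <- (sqrt_pow2 (NN v + J3 v)) by lra; f_equal.
  cbv [w0 cadd cmul ci Kminus Lminus K1 K2 L1 L2 J3 fst snd].
  surface_coords Hs; cbn [pow] in *; nsatz.
Qed.

Lemma cnorm_w1 v : on_surface v -> cnorm (w1 v) = NN v - J3 v.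
Proof.
  intro Hs; pose proof (J3_between v).
  unfold cnorm; rewrite <- (sqrt_pow2 (NN v - J3 v)) by lra; f_equal.
  cbv [w1 copp cadd cmul ci Kplus Lplus K1 K2 L1 L2 J3 fst snd].
  surface_coords Hs; cbn [pow] in *; nsatz.
Qed.

Lemma is_gradient_local f g v a d : 0 < d ->
  (forall u, (forall j, (j < 6)%nat -> Rabs (u j - v j) < d) -> f u = g u) ->
  is_gradient g v a -> is_gradient f v a.
Proof.
  intros Hd Efg Hg i Hi.
  apply (derivable_pt_lim_locally_ext (fun t => g (upd v i t)) _ _ (v i - d) (v i + d)).
  - lra.
  - intros t Ht; symmetry; apply Efg; intros j _; unfold upd.
    destruct (Nat.eqb_spec j i) as [-> | _]; [apply Rabs_def1 | rewrite Rminus_diag, Rabs_R0]; lra.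
  - apply Hg, Hi.
Qed.

Definition dre (z : V -> Cx) (v : V) (i : nat) : R := pd (fun u => fst (z u)) i v.
Definition dim (z : V -> Cx) (v : V) (i : nat) : R := pd (fun u => snd (z u)) i v.

Lemma is_gradient_local_sqrt z w v : local_sqrt z w v -> cdiff z v ->
  is_gradient (fun u => fst (w u)) v
    (fun i => 2 * fst (z v) * dre z v i - 2 * snd (z v) * dim z v i) /\
  is_gradient (fun u => snd (w u)) v
    (fun i => 2 * fst (z v) * dim z v i + 2 * snd (z v) * dre z v i).
Proof.
  intros (d & Hd & Hzw) (Hre & Him).
  apply is_gradient_of_partials in Hre, Him; split.
  - apply (is_gradient_local _ (fun u => fst (z u) * fst (z u) - snd (z u) * snd (z u)) _ _ d Hd).
    { intros u Hu; rewrite <- (Hzw u Hu); reflexivity. }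
    eapply is_gradient_ext;
      [| apply is_gradient_minus; apply is_gradient_mult; eassumption].
    intros; unfold dre, dim; ring.
  - apply (is_gradient_local _ (fun u => fst (z u) * snd (z u) + snd (z u) * fst (z u)) _ _ d Hd).
    { intros u Hu; rewrite <- (Hzw u Hu); reflexivity. }
    eapply is_gradient_ext;
      [| apply is_gradient_plus; apply is_gradient_mult; eassumption].
    intros; unfold dre, dim; ring.
Qed.

Lemma cdirac_gradient F G v a1 b1 a2 b2 :
  is_gradient (fun u => fst (F u)) v a1 -> is_gradient (fun u => snd (F u)) v b1 ->
  is_gradient (fun u => fst (G u)) v a2 -> is_gradient (fun u => snd (G u)) v b2 ->
  cdirac F G v = (dirac_form v a1 a2 - dirac_form v b1 b2, dirac_form v a1 b2 + dirac_form v b1 a2).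
Proof.
  intros Ha1 Hb1 Ha2 Hb2; unfold cdirac; cbv zeta.
  rewrite (dirac_gradient _ _ _ _ _ Ha1 Ha2), (dirac_gradient _ _ _ _ _ Hb1 Hb2),
    (dirac_gradient _ _ _ _ _ Ha1 Hb2), (dirac_gradient _ _ _ _ _ Hb1 Ha2).
  reflexivity.
Qed.

Lemma cdiff_cconj z v : cdiff z v -> cdiff (cconj z) v.
Proof.
  intros (Hre & Him); split; [exact Hre |].
  apply is_gradient_of_partials, is_gradient_opp, has_partials_of_gradient in Him; exact Him.
Qed.

Lemma local_sqrt_cconj z w v : local_sqrt z w v -> local_sqrt (cconj z) (cconj w) v.
Proof.
  intros (d & Hd & Hzw); exists d; split; [exact Hd |]; intros u Hu.
  unfold cconj; rewrite <- (Hzw u Hu); unfold cmul; cbn; f_equal; ring.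
Qed.

Definition twice (c : Cx) : Cx := (2 * fst c, 2 * snd c).

Lemma cdirac_local_sqrt z w z' w' v :
  local_sqrt z w v -> cdiff z v -> local_sqrt z' w' v -> cdiff z' v ->
  cdirac w w' v = cmul (cmul (twice (z v)) (twice (z' v))) (cdirac z z' v).
Proof.
  intros Hzw Hz Hzw' Hz'.
  destruct (is_gradient_local_sqrt _ _ _ Hzw Hz) as (Hwre & Hwim).
  destruct (is_gradient_local_sqrt _ _ _ Hzw' Hz') as (Hwre' & Hwim').
  destruct Hz as (Hre & Him); destruct Hz' as (Hre' & Him').
  apply is_gradient_of_partials in Hre, Him, Hre', Him'.
  rewrite (cdirac_gradient _ _ _ _ _ _ _ Hwre Hwim Hwre' Hwim'),
    (cdirac_gradient _ _ _ _ _ _ _ Hre Him Hre' Him').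
  unfold dirac_form, symp, twice, cmul, dre, dim, Rdiv; cbv zeta; cbn [fst snd]; f_equal; ring.
Qed.

Lemma local_sqrt_at z w v : local_sqrt z w v -> cmul (z v) (z v) = w v.
Proof.
  intros (d & Hd & Hzw); apply Hzw; intros j _; rewrite Rminus_diag, Rabs_R0; exact Hd.
Qed.

Lemma cnorm_cmul_self c : cnorm c ^ 2 = cnorm (cmul c c).
Proof.
  unfold cnorm, cmul; cbn [fst snd]; rewrite pow2_sqrt by nra.
  symmetry; rewrite <- (sqrt_pow2 (fst c ^ 2 + snd c ^ 2)) by nra; f_equal; ring.
Qed.

Lemma cmul_cancel s c c' : s <> (0, 0) -> cmul s c = cmul s c' -> c = c'.
Proof.
  destruct s as [s1 s2], c as [a b], c' as [a' b']; unfold cmul; cbn [fst snd].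
  intros Hs E; injection E as E1 E2.
  assert (Ea : (s1 * s1 + s2 * s2) * (a - a') = 0) by nsatz.
  assert (Eb : (s1 * s1 + s2 * s2) * (b - b') = 0) by nsatz.
  assert (Hpos : 0 < s1 * s1 + s2 * s2).
  { destruct (Req_dec s1 0), (Req_dec s2 0); subst; [contradiction | nra | nra | nra]. }
  apply Rmult_integral in Ea, Eb; f_equal; lra.
Qed.

Lemma cmul_neq0 a b : a <> (0, 0) -> b <> (0, 0) -> cmul a b <> (0, 0).
Proof.
  intros Ha Hb E; apply Hb, (cmul_cancel a); [exact Ha |].
  rewrite E; unfold cmul; cbn [fst snd]; f_equal; ring.
Qed.

Lemma twice_neq0 c : c <> (0, 0) -> twice c <> (0, 0).
Proof.
  destruct c as [a b]; unfold twice; cbn [fst snd]; intros Hc E; injection E as Ea Eb.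
  apply Hc; f_equal; lra.
Qed.

Lemma cconj_neq0 z v : z v <> (0, 0) -> cconj z v <> (0, 0).
Proof.
  unfold cconj; destruct (z v) as [a b]; cbn [fst snd]; intros Hz E; injection E as Ea Eb.
  apply Hz; f_equal; lra.
Qed.

Lemma local_sqrt_neq0 z w v g : local_sqrt z w v -> cdiff z v ->
  is_gradient (fun u => fst (w u)) v g -> g 0%nat <> 0 -> z v <> (0, 0).
Proof.
  intros Hzw Hz Hg Hg0 Hz0.
  destruct (is_gradient_local_sqrt _ _ _ Hzw Hz) as (Hwre & _).
  apply Hg0; rewrite <- (is_gradient_pd _ _ _ 0 Hg), (is_gradient_pd _ _ _ 0 Hwre) by lia.
  rewrite Hz0; cbn [fst snd]; ring.
Qed.

Lemma cdirac_sqrt_eq0 z w z' w' v :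
  local_sqrt z w v -> cdiff z v -> local_sqrt z' w' v -> cdiff z' v ->
  z v <> (0, 0) -> z' v <> (0, 0) -> cdirac w w' v = (0, 0) -> cdirac z z' v = (0, 0).
Proof.
  intros Hzw Hz Hzw' Hz' Hz0 Hz0' Hw.
  rewrite (cdirac_local_sqrt _ _ _ _ _ Hzw Hz Hzw' Hz') in Hw.
  apply (cmul_cancel (cmul (twice (z v)) (twice (z' v)))).
  - apply cmul_neq0; apply twice_neq0; assumption.
  - rewrite Hw; unfold cmul; cbn [fst snd]; f_equal; ring.
Qed.

Lemma cdirac_sqrt_cconj z w v : local_sqrt z w v -> cdiff z v -> z v <> (0, 0) ->
  cdirac w (cconj w) v = (0, - 4 * cnorm (w v)) -> cdirac z (cconj z) v = (0, -1).
Proof.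
  intros Hzw Hz Hz0 Hw.
  rewrite (cdirac_local_sqrt _ _ _ _ _ Hzw Hz (local_sqrt_cconj _ _ _ Hzw) (cdiff_cconj _ _ Hz))
    in Hw.
  rewrite <- (local_sqrt_at _ _ _ Hzw), <- cnorm_cmul_self in Hw.
  assert (Hs : cmul (twice (z v)) (twice (cconj z v)) = (4 * cnorm (z v) ^ 2, 0)).
  { unfold cnorm, twice, cconj, cmul; cbn [fst snd]; rewrite pow2_sqrt by nra; f_equal; ring. }
  rewrite Hs in Hw; apply (cmul_cancel (4 * cnorm (z v) ^ 2, 0)).
  - rewrite <- Hs; apply cmul_neq0; apply twice_neq0; [exact Hz0 | apply cconj_neq0, Hz0].
  - rewrite Hw; unfold cmul; cbn [fst snd]; f_equal; ring.
Qed.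

Lemma grad_K1_x1_pos v : 0 < normx v -> 0 < grad_K v 0 0.
Proof.
  intro Hr; unfold grad_K, grad_normx, unit_vec; cbv [Nat.eqb Nat.ltb Nat.leb].
  replace (v 0%nat / normx v * v 0%nat + normx v * 1) with ((v 0%nat ^ 2 + normx v ^ 2) / normx v)
    by (field; lra).
  apply Rdiv_lt_0_compat; nra.
Qed.

Lemma grad_L2_x1 v : grad_L v 4 0 = 0.
Proof. unfold grad_L, grad_normp, unit_vec; cbv [Nat.eqb Nat.ltb Nat.leb]; ring. Qed.

Lemma local_sqrt_w0_neq0 z v : on_surface v -> local_sqrt z w0 v -> cdiff z v -> z v <> (0, 0).
Proof.
  intros Hs Hzw Hz; apply (local_sqrt_neq0 _ _ _ _ Hzw Hz
    (ltac:(rewrite w0_re; apply is_gradient_combo;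
           [apply is_gradient_K_surface | apply is_gradient_L_surface]; exact Hs))).
  destruct (on_surface_facts _ Hs) as (Hr & _).
  pose proof (grad_K1_x1_pos _ Hr); rewrite grad_L2_x1; lra.
Qed.

Lemma local_sqrt_w1_neq0 z v : on_surface v -> local_sqrt z w1 v -> cdiff z v -> z v <> (0, 0).
Proof.
  intros Hs Hzw Hz; apply (local_sqrt_neq0 _ _ _ _ Hzw Hz
    (ltac:(rewrite w1_re; apply is_gradient_combo;
           [apply is_gradient_L_surface | apply is_gradient_K_surface]; exact Hs))).
  destruct (on_surface_facts _ Hs) as (Hr & _).
  pose proof (grad_K1_x1_pos _ Hr); rewrite grad_L2_x1; lra.
Qed.

Lemma cdirac_self F v : cdirac F F v = (0, 0).
Proof.
  unfold cdirac; cbv zeta.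
  rewrite !dirac_self, (dirac_antisym (fun u => snd (F u))); f_equal; ring.
Qed.

Theorem mainTheorem7 :
  forall v : V, on_surface v ->
    cnorm (w0 v) = NN v + J3 v /\
    cnorm (w1 v) = NN v - J3 v /\
    cdirac w0 w1 v = (0, 0) /\
    cdirac w0 (cconj w1) v = (0, 0) /\
    cdirac w0 (cconj w0) v = (0, - 4 * (NN v + J3 v)) /\
    cdirac w1 (cconj w1) v = (0, - 4 * (NN v - J3 v)) /\
    (forall z0 z1 : V -> Cx,
       local_sqrt z0 w0 v -> local_sqrt z1 w1 v ->
       cdiff z0 v -> cdiff z1 v ->
       / 2 * (cnorm (z0 v) ^ 2 + cnorm (z1 v) ^ 2) = NN v /\
       / 2 * (cnorm (z0 v) ^ 2 - cnorm (z1 v) ^ 2) = J3 v /\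
       cdirac z0 (cconj z0) v = (0, -1) /\
       cdirac z1 (cconj z1) v = (0, -1) /\
       cdirac z0 (cconj z1) v = (0, 0) /\
       cdirac z1 (cconj z0) v = (0, 0) /\
       cdirac z0 z1 v = (0, 0) /\
       cdirac z0 z0 v = (0, 0) /\
       cdirac z1 z1 v = (0, 0)).
Proof.
  intros v Hs.
  pose proof (cnorm_w0 v Hs) as Hn0; pose proof (cnorm_w1 v Hs) as Hn1.
  pose proof (cdirac_w0_cconj_w0 v Hs) as H00; pose proof (cdirac_w1_cconj_w1 v Hs) as H11.
  refine (conj Hn0 (conj Hn1 (conj (cdirac_w0_w1 v Hs)
            (conj (cdirac_w0_cconj_w1 v Hs) (conj H00 (conj H11 _)))))).
  intros z0 z1 Hz0w Hz1w Hz0 Hz1.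
  assert (Hsq0 : cnorm (z0 v) ^ 2 = NN v + J3 v)
    by (rewrite cnorm_cmul_self, (local_sqrt_at _ _ _ Hz0w); exact Hn0).
  assert (Hsq1 : cnorm (z1 v) ^ 2 = NN v - J3 v)
    by (rewrite cnorm_cmul_self, (local_sqrt_at _ _ _ Hz1w); exact Hn1).
  pose proof (local_sqrt_w0_neq0 _ _ Hs Hz0w Hz0) as Hz0v.
  pose proof (local_sqrt_w1_neq0 _ _ Hs Hz1w Hz1) as Hz1v.
  rewrite Hsq0, Hsq1; repeat split; try field; try apply cdirac_self.
  - apply (cdirac_sqrt_cconj _ _ _ Hz0w Hz0 Hz0v); rewrite Hn0; exact H00.
  - apply (cdirac_sqrt_cconj _ _ _ Hz1w Hz1 Hz1v); rewrite Hn1; exact H11.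
  - apply (cdirac_sqrt_eq0 _ _ _ _ _ Hz0w Hz0 (local_sqrt_cconj _ _ _ Hz1w) (cdiff_cconj _ _ Hz1)
             Hz0v (cconj_neq0 _ _ Hz1v) (cdirac_w0_cconj_w1 v Hs)).
  - apply (cdirac_sqrt_eq0 _ _ _ _ _ Hz1w Hz1 (local_sqrt_cconj _ _ _ Hz0w) (cdiff_cconj _ _ Hz0)
             Hz1v (cconj_neq0 _ _ Hz0v) (cdirac_w1_cconj_w0 v Hs)).
  - apply (cdirac_sqrt_eq0 _ _ _ _ _ Hz0w Hz0 Hz1w Hz1 Hz0v Hz1v (cdirac_w0_w1 v Hs)).
Qed.
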